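(* Let $f_i$ and $f_j$ be finite set densities on finite subsets of $\mathbb{R}^d$ with cardinality pmfs $p_i,p_j$ and localisation densities $\rho_{i,n},\rho_{j,n}$, let $\omega\in[0,1]$, and let $f_\omega$, $\tilde f_\omega$, $\tilde p_\omega$, $z_\omega(n)$ be as in the context. Let $X=\{x_1,\ldots,x_n\}$ be a finite subset of $\mathbb{R}^d$ with $f_\omega(X)>0$ and $z_\omega(n)>0$. Then $\tilde f_\omega$ is pointwise inconsistent at $X$, i.e. $$\tilde f_\omega(X)<\min\{f_i(X),f_j(X)\},$$ if $$\frac{E_{\tilde p_\omega}\{z_\omega(n)\}}{z_\omega(n)}<\frac{\min\{f_i(X),f_j(X)\}}{f_\omega(X)},$$ where $E_{\tilde p_\omega}\{z_\omega(n)\}=\sum_{n'=0}^\infty\tilde p_\omega(n')z_\omega(n')$; moreover, $\frac{\min\{f_i(X),f_j(X)\}}{f_\omega(X)}\le1$.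
   Context: A finite set density is written $f(\{x_1,\ldots,x_n\})=p(n)\,n!\,\rho_n(x_1,\ldots,x_n)$ with $p$ a pmf on $\{0,1,\ldots\}$ and $\rho_n$ a symmetric probability density on $(\mathbb{R}^d)^n$. For $\omega\in[0,1]$ define $z_\omega(0)=1$, $z_\omega(n)=\int\rho_{i,n}^{1-\omega}\rho_{j,n}^{\omega}\,\mathrm{d}x_1\cdots\mathrm{d}x_n$, $\rho_{\omega,n}=\rho_{i,n}^{1-\omega}\rho_{j,n}^{\omega}/z_\omega(n)$, $N_\omega=\sum_{n'}p_i^{1-\omega}(n')p_j^{\omega}(n')z_\omega(n')$, $p_\omega(n)=p_i^{1-\omega}(n)p_j^{\omega}(n)z_\omega(n)/N_\omega$. The finite set exponential mixture density is $f_\omega(X)=p_\omega(n)\,n!\,\rho_{\omega,n}(x_1,\ldots,x_n)$. Define $\tilde N_\omega=\sum_{n'}p_i^{1-\omega}(n')p_j^{\omega}(n')$, $\tilde p_\omega(n)=p_i^{1-\omega}(n)p_j^{\omega}(n)/\tilde N_\omega$ (the exponential mixture of the cardinality pmfs), and the decoupled fused density $\tilde f_\omega(X)=\tilde p_\omega(n)\,n!\,\rho_{\omega,n}(x_1,\ldots,x_n)$, where $n=|X|$. *)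

From HB Require Import structures.
From mathcomp Require Import all_boot all_order all_algebra all_fingroup.
From mathcomp Require Import all_classical all_reals all_analysis.
Set Implicit Arguments. Unset Strict Implicit. Unset Printing Implicit Defensive.
Import Order.TTheory GRing.Theory Num.Theory.
Local Open Scope ring_scope.

(* A point of R^d is a d.-tuple R; an ordered n-point configuration
   (x_1,...,x_n) in (R^d)^n is an n.-tuple of such points.  Both carry the
   library's product (tuple) sigma-algebra built on the Borel sets of R. *)
Definition pt (R : realType) (d : nat) := d.-tuple R.
Definition conf (R : realType) (d n : nat) := n.-tuple (d.-tuple R).

Fixpoint tint (R : realType) (T : Type) (intT : (T -> \bar R) -> \bar R)
    (n : nat) : (n.-tuple T -> \bar R) -> \bar R :=
  match n return (n.-tuple T -> \bar R) -> \bar R with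
  | 0 => fun F => F [tuple]
  | n'.+1 => fun F =>
      intT (fun x => @tint R T intT n' (fun t => F [tuple of x :: t]))
  end.

(* Lebesgue integral over R^d (iterated one-dimensional Lebesgue integrals;
   for nonnegative measurable integrands this is the integral w.r.t. the
   d-dimensional Lebesgue measure, by Tonelli). *)
Definition int_Rd (R : realType) (d : nat) (g : d.-tuple R -> \bar R) : \bar R :=
  @tint R R (fun h => (\int[@lebesgue_measure R]_x h x)%E) d g.

Definition int_conf (R : realType) (d n : nat) (F : conf R d n -> \bar R)
  : \bar R := @tint R (d.-tuple R) (@int_Rd R d) n F.

Definition is_pmf (R : realType) (p : nat -> R) : Prop :=
  (forall n, 0 <= p n) /\ (\sum_(n <oo) (p n)%:E)%E = 1%E.

Definition is_loc_densities (R : realType) (d : nat)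
    (rho : forall n, conf R d n -> R) : Prop :=
  forall n,
    measurable_fun [set: conf R d n] (rho n) /\
    (forall x, 0 <= rho n x) /\
    int_conf (fun x => (rho n x)%:E) = 1%E /\
    (forall (x : conf R d n) (s : 'S_n),
        rho n [tuple tnth x (s i) | i < n] = rho n x).

(* finite set density  f({x_1..x_n}) = p(n) n! rho_n(x_1..x_n) *)
Definition fsdens (R : realType) (d : nat) (p : nat -> R)
    (rho : forall n, conf R d n -> R) (n : nat) (x : conf R d n) : R :=
  p n * (n`!)%:R * rho n x.

Section fusion.
Variables (R : realType) (d : nat) (p_i p_j : nat -> R)
  (rho_i rho_j : forall n, conf R d n -> R) (w : R).

Definition z_w (n : nat) : R :=
  if n is 0 then 1 else
  fine (int_conf (fun x => ((@rho_i n x) `^ (1 - w) * (@rho_j n x) `^ w)%:E)).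

Definition rho_w (n : nat) (x : conf R d n) : R :=
  (@rho_i n x) `^ (1 - w) * (@rho_j n x) `^ w / z_w n.

Definition N_w : R :=
  fine (\sum_(n <oo) ((p_i n) `^ (1 - w) * (p_j n) `^ w * z_w n)%:E)%E.

Definition p_w (n : nat) : R :=
  (p_i n) `^ (1 - w) * (p_j n) `^ w * z_w n / N_w.

Definition f_w (n : nat) (x : conf R d n) : R := fsdens p_w (@rho_w) x.

Definition Ntilde_w : R :=
  fine (\sum_(n <oo) ((p_i n) `^ (1 - w) * (p_j n) `^ w)%:E)%E.

Definition ptilde_w (n : nat) : R :=
  (p_i n) `^ (1 - w) * (p_j n) `^ w / Ntilde_w.

Definition ftilde_w (n : nat) (x : conf R d n) : R := fsdens ptilde_w (@rho_w) x.

Definition E_ptilde_z : R :=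
  fine (\sum_(n <oo) (ptilde_w n * z_w n)%:E)%E.

End fusion.

From HB Require Import structures.
From mathcomp Require Import all_boot all_order all_algebra all_fingroup.
From mathcomp Require Import all_classical all_reals all_analysis.
From mathcomp Require Import measurable_realfun ring.
Import Order.TTheory GRing.Theory Num.Theory.
Local Open Scope ring_scope.

(* Both fused densities carry the same localisation density rho_w, so they
   differ only in their cardinality parts:
   ptilde_w(n) / p_w(n) = (N_w / Ntilde_w) / z_w(n) = E_ptilde{z_w} / z_w(n),
   which is the first claim.  For the second, the weighted AM-GM inequality
   a^(1-w) b^w <= (1-w) a + w b, integrated against the probability densities
   rho_{i,n}, rho_{j,n} and summed against the pmfs p_i, p_j, gives z_w(n) <= 1
   and sum_n p_i(n)^(1-w) p_j(n)^w <= 1, hence N_w <= 1 (these bounds also make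
   every series finite, so the [fine] in the definitions loses nothing).  As
   f_w(X) = f_i(X)^(1-w) f_j(X)^w / N_w, this gives
   f_w(X) >= f_i(X)^(1-w) f_j(X)^w >= min(f_i(X), f_j(X)). *)

Section weighted_means.
Context {R : realType}.
Implicit Types a b c w : R.

Lemma mul_powR_onem c w : 0 <= c -> c `^ (1 - w) * c `^ w = c.
Proof. by move=> c0; rewrite -powRD ?subrK ?oner_eq0 // powRr1. Qed.

Lemma geo_le_arith_mean a b w : 0 <= a -> 0 <= b -> 0 <= w -> w <= 1 ->
  a `^ (1 - w) * b `^ w <= (1 - w) * a + w * b.
Proof.
move=> a0 b0 w0 w1.
have [->|w_neq0] := eqVneq w 0.
  by rewrite subr0 powRr0 powRr1 // mulr1 mul1r mul0r addr0.
have [->|w_neq1] := eqVneq w 1.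
  by rewrite subrr powRr0 powRr1 // mul1r mul0r add0r.
have [->|a_neq0] := eqVneq a 0.
  by rewrite powR0 ?subr_eq0 1?eq_sym // mul0r mulr0 add0r mulr_ge0.
have [->|b_neq0] := eqVneq b 0.
  by rewrite (@powR0 _ w) // !mulr0 addr0 mulr_ge0 // subr_ge0.
have := @convex_expR R (Itv01 w0 w1) (ln b) (ln a).
rewrite !convRE /= !lnK ?posrE ?lt_def ?a_neq0 ?b_neq0 // /unstable.onem.
rewrite /powR (negbTE a_neq0) (negbTE b_neq0) -expRD.
by rewrite addrC (mulrC w (ln b)) (mulrC (1 - w)) (addrC (w * b)).
Qed.

Lemma min_le_geo_mean a b w : 0 <= a -> 0 <= b -> 0 <= w -> w <= 1 ->
  Num.min a b <= a `^ (1 - w) * b `^ w.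
Proof.
move=> a0 b0 w0 w1.
have m0 : 0 <= Num.min a b by rewrite le_min a0 b0.
rewrite -{1}(mul_powR_onem _ w m0).
by apply: ler_pM; rewrite ?powR_ge0 // ge0_ler_powR ?subr_ge0 ?nnegrE ?ge_min ?lexx ?orbT.
Qed.

End weighted_means.

Local Open Scope ereal_scope.

(* Laws of the Lebesgue integral of nonnegative functions that are stable under
   iteration by [tint]; the Tonelli measurability of partial integrals is the
   field that makes the induction go through. *)
Record nnintegral {R : realType} {d} {T : measurableType d} (intT : (T -> \bar R) -> \bar R)
    : Prop := NNIntegral {
  nnintegral_ge0 : forall f, (forall x, 0 <= f x) -> 0 <= intT f;
  nnintegral_le : forall f g, measurable_fun setT f -> measurable_fun setT g ->
    (forall x, 0 <= f x) -> (forall x, f x <= g x) -> intT f <= intT g;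
  nnintegralD : forall f g, measurable_fun setT f -> measurable_fun setT g ->
    (forall x, 0 <= f x) -> (forall x, 0 <= g x) ->
    intT (fun x => f x + g x) = intT f + intT g;
  nnintegralZl : forall c f, (0 <= c)%R -> measurable_fun setT f ->
    (forall x, 0 <= f x) -> intT (fun x => c%:E * f x) = c%:E * intT f;
  measurable_nnintegral : forall {d'} {A : measurableType d'} (H : A * T -> \bar R),
    measurable_fun setT H -> (forall z, 0 <= H z) ->
    measurable_fun setT (fun a => intT (fun x => H (a, x))) }.

Arguments nnintegral_ge0 {R d T intT}.
Arguments nnintegral_le {R d T intT}.
Arguments nnintegralD {R d T intT}.
Arguments nnintegralZl {R d T intT}.
Arguments measurable_nnintegral {R d T intT} _ {d' A}.

Section nnintegral.
Context {R : realType}.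

Lemma nnintegral_lebesgue :
  nnintegral (fun h : R -> \bar R => \int[@lebesgue_measure R]_x h x).
Proof.
split.
- by move=> f f0; apply: integral_ge0 => x _.
- by move=> f g *; apply: ge0_le_integral.
- by move=> f g *; apply: ge0_integralD => // x _.
- by move=> c f *; apply: ge0_integralZl_EFin => // x _.
- move=> d' A H mH H0.
  exact: (@measurable_fun_fubini_tonelli_F _ _ A _ R (@lebesgue_measure R) H mH H0).
Qed.

Section tint.
Variables (d : measure_display) (T : measurableType d).
Variable intT : (T -> \bar R) -> \bar R.
Hypothesis intT_nn : nnintegral intT.

Lemma nnintegral_tint0 : nnintegral (@tint _ _ intT 0%N).
Proof.
split => //=.
move=> d' A H mH _; apply: measurableT_comp mH _.
exact: measurable_fun_pair.
Qed.

Section tintS.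
Variable n : nat.
Hypothesis tint_nn : nnintegral (@tint _ _ intT n).

Lemma measurable_tint_cons d' (A : measurableType d') (H : A * n.+1.-tuple T -> \bar R) :
  measurable_fun setT H -> (forall z, 0 <= H z) ->
  measurable_fun setT (fun ax : A * T => @tint _ _ intT n (fun t => H (ax.1, [tuple of ax.2 :: t]))).
Proof.
move=> mH H0.
apply: (measurable_nnintegral tint_nn
  (fun q : (A * T) * n.-tuple T => H (q.1.1, [tuple of q.1.2 :: q.2]))) => //.
apply: measurableT_comp mH _; apply: measurable_fun_pair.
- exact: measurableT_comp.
- by apply: measurable_cons; [exact: measurableT_comp|exact: measurable_snd].
Qed.

Lemma measurable_tint_section (g : n.+1.-tuple T -> \bar R) :
  measurable_fun setT g -> (forall t, 0 <= g t) ->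
  measurable_fun setT (fun x => @tint _ _ intT n (fun t => g [tuple of x :: t])).
Proof.
move=> mg g0; apply: (measurable_nnintegral tint_nn
  (fun xt : T * n.-tuple T => g [tuple of xt.1 :: xt.2])) => //.
by apply: measurableT_comp mg _; apply: measurable_cons.
Qed.

Lemma nnintegral_tintS : nnintegral (@tint _ _ intT n.+1).
Proof.
have [tint_ge0 tint_le tintD tintZl _] := tint_nn.
have tint_section_ge0 (f : n.+1.-tuple T -> \bar R) x :
    (forall t, 0 <= f t) -> 0 <= @tint _ _ intT n (fun t => f [tuple of x :: t]).
  by move=> f0; apply: tint_ge0.
have msection (f : n.+1.-tuple T -> \bar R) (x : T) : measurable_fun setT f ->
    measurable_fun setT (fun t : n.-tuple T => f [tuple of x :: t]).
  by move=> mf; apply: measurableT_comp mf _; apply: measurable_cons.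
split => /=.
- by move=> f f0; apply: nnintegral_ge0 => // x; apply: tint_section_ge0.
- move=> f g mf mg f0 fg; apply: nnintegral_le => //.
  + by apply: measurable_tint_section.
  + by apply: measurable_tint_section => // t; apply: le_trans (fg t).
  + by move=> x; apply: tint_section_ge0.
  + by move=> x; apply: tint_le => //; apply: msection.
- move=> f g mf mg f0 g0; rewrite -(nnintegralD intT_nn).
  + by congr intT; apply: funext => x; apply: tintD => //; apply: msection.
  + by apply: measurable_tint_section.
  + by apply: measurable_tint_section.
  + by move=> x; apply: tint_section_ge0.
  + by move=> x; apply: tint_section_ge0.
- move=> c f c0 mf f0; rewrite -(nnintegralZl intT_nn) //.
  + by congr intT; apply: funext => x; apply: tintZl => //; apply: msection.
  + by apply: measurable_tint_section.
  + by move=> x; apply: tint_section_ge0.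
- move=> d' A H mH H0.
  apply: (measurable_nnintegral intT_nn
    (fun ax => @tint _ _ intT n (fun t => H (ax.1, [tuple of ax.2 :: t])))) => //.
  + exact: measurable_tint_cons.
  + by move=> ax; apply: tint_ge0.
Qed.

End tintS.

Lemma nnintegral_tint n : nnintegral (@tint _ _ intT n).
Proof. by elim: n => [|n]; [exact: nnintegral_tint0|exact: nnintegral_tintS]. Qed.

End tint.

Lemma nnintegral_int_conf d n : nnintegral (@int_conf R d n).
Proof. exact/nnintegral_tint/nnintegral_tint/nnintegral_lebesgue. Qed.

Lemma nnintegral_geo_mean_le1 {d} {T : measurableType d} {intT} (f g : T -> R) w :
  nnintegral intT -> (0 <= w)%R -> (w <= 1)%R ->
  measurable_fun setT f -> measurable_fun setT g ->
  (forall x, 0 <= f x)%R -> (forall x, 0 <= g x)%R ->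
  intT (fun x => (f x)%:E) = 1 -> intT (fun x => (g x)%:E) = 1 ->
  intT (fun x => (f x `^ (1 - w) * g x `^ w)%:E) <= 1.
Proof.
move=> [_ int_le intD intZl _] w0 w1 mf mg f0 g0 intf1 intg1.
have mEf : measurable_fun setT (EFin \o f) by exact/measurable_EFinP.
have mEg : measurable_fun setT (EFin \o g) by exact/measurable_EFinP.
have onem_w0 : (0 <= 1 - w)%R by rewrite subr_ge0.
have -> : 1 = (1 - w)%:E * 1 + w%:E * 1 by rewrite !mule1 -EFinD subrK.
rewrite -{1}intf1 -intg1 -!intZl // -intD /=.
- apply: int_le => [||x|x]; rewrite ?lee_fin ?mulr_ge0 ?powR_ge0 //.
  + apply/measurable_EFinP; apply: measurable_funM.
    * exact: measurableT_comp (measurable_powR _) mf.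
    * exact: measurableT_comp (measurable_powR _) mg.
  + by apply: emeasurable_funD; apply: measurable_funeM.
  + exact: geo_le_arith_mean.
- exact: measurable_funeM.
- exact: measurable_funeM.
- by move=> x; rewrite -EFinM lee_fin mulr_ge0.
- by move=> x; rewrite -EFinM lee_fin mulr_ge0.
Qed.

End nnintegral.

Local Close Scope ereal_scope.

Lemma fineK_le1 (R : realType) (e : \bar R) : (0 <= e)%E -> (e <= 1)%E -> (fine e)%:E = e.
Proof. by move=> e0 e1; rewrite fineK // ge0_fin_numE // (le_lt_trans e1) ?ltry. Qed.

Section fusion.
Context {R : realType} {d : nat} {p_i p_j : nat -> R}.
Context {rho_i rho_j : forall n, conf R d n -> R} {w : R}.
Hypotheses (hpi : is_pmf p_i) (hpj : is_pmf p_j).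
Hypotheses (hri : is_loc_densities rho_i) (hrj : is_loc_densities rho_j).
Hypotheses (hw0 : 0 <= w) (hw1 : w <= 1).

Local Notation z := (z_w rho_i rho_j w).
Local Notation pw k := (p_i k `^ (1 - w) * p_j k `^ w).
Local Notation Nw := (N_w p_i p_j rho_i rho_j w).
Local Notation Nt := (Ntilde_w p_i p_j w).

Lemma int_conf_geo_mean_ge0 k :
  (0 <= int_conf (fun x => (rho_i k x `^ (1 - w) * rho_j k x `^ w)%:E))%E.
Proof.
have := nnintegral_ge0 (@nnintegral_int_conf R d k).
by apply => x; rewrite lee_fin mulr_ge0 ?powR_ge0.
Qed.

Lemma z_w_ge0 k : 0 <= z k.
Proof. by case: k => [|k]; [exact: ler01|exact/fine_ge0/int_conf_geo_mean_ge0]. Qed.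

Lemma z_w_le1 k : z k <= 1.
Proof.
case: k => [|k]; first exact: lexx.
have [mi [i0 [i1 _]]] := hri k.+1; have [mj [j0 [j1 _]]] := hrj k.+1.
have int_le1 :=
  nnintegral_geo_mean_le1 _ _ _ (nnintegral_int_conf d k.+1) hw0 hw1 mi mj i0 j0 i1 j1.
by rewrite -lee_fin fineK_le1 ?int_conf_geo_mean_ge0.
Qed.

Lemma pmf_geo_mean_le1 : (\sum_(k <oo) (pw k)%:E <= 1)%E.
Proof.
have [pi0 pi1] := hpi; have [pj0 pj1] := hpj.
apply: (@le_trans _ _ (\sum_(k <oo) ((1 - w)%:E * (p_i k)%:E + w%:E * (p_j k)%:E))%E).
  apply: lee_nneseries => [k _ _|k _]; first by rewrite lee_fin mulr_ge0 ?powR_ge0.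
  by rewrite -!EFinM -EFinD lee_fin geo_le_arith_mean.
rewrite nneseriesD => [|k _ _|k _ _]; last 2 first.
- by rewrite -EFinM lee_fin mulr_ge0 ?subr_ge0.
- by rewrite -EFinM lee_fin mulr_ge0.
by rewrite !nneseriesZl ?pi1 ?pj1 ?mule1 -?EFinD ?subrK // => k _; rewrite lee_fin.
Qed.

Lemma pw_ge0 k : 0 <= pw k.
Proof. by rewrite mulr_ge0 ?powR_ge0. Qed.

Lemma series_pw_z_le1 : (\sum_(k <oo) (pw k * z k)%:E <= 1)%E.
Proof.
apply: le_trans pmf_geo_mean_le1; apply: lee_nneseries => k *.
  by rewrite lee_fin mulr_ge0 ?pw_ge0 ?z_w_ge0.
by rewrite lee_fin ler_piMr ?pw_ge0 ?z_w_le1.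
Qed.

Lemma N_wE : (Nw%:E = \sum_(k <oo) (pw k * z k)%:E)%E.
Proof.
rewrite fineK_le1 ?series_pw_z_le1 // nneseries_ge0 // => k *.
by rewrite lee_fin mulr_ge0 ?pw_ge0 ?z_w_ge0.
Qed.

Lemma N_w_ge0 : 0 <= Nw.
Proof. by rewrite -lee_fin N_wE nneseries_ge0 // => k *; rewrite lee_fin mulr_ge0 ?pw_ge0 ?z_w_ge0. Qed.

Lemma N_w_le1 : Nw <= 1.
Proof. by rewrite -lee_fin N_wE series_pw_z_le1. Qed.

Lemma E_ptilde_zE : E_ptilde_z p_i p_j rho_i rho_j w = Nw / Nt.
Proof.
rewrite /E_ptilde_z /ptilde_w.
under eq_eseriesr do rewrite mulrAC mulrC EFinM.
rewrite nneseriesZl => [|k _]; last by rewrite lee_fin mulr_ge0 ?pw_ge0 ?z_w_ge0.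
by rewrite -N_wE mulrC.
Qed.

Lemma fsdens_geo_mean n (X : conf R d n) :
  fsdens p_i rho_i X `^ (1 - w) * fsdens p_j rho_j X `^ w =
  pw n * n`!%:R * (rho_i n X `^ (1 - w) * rho_j n X `^ w).
Proof.
have [[pi0 _] [pj0 _]] := (hpi, hpj).
have [[_ [ri0 _]] [_ [rj0 _]]] := (hri n, hrj n).
have fact_ge0 : 0 <= n`!%:R :> R by [].
rewrite /fsdens !powRM ?mulr_ge0 // -[in RHS](mul_powR_onem _ w fact_ge0).
ring.
Qed.

Lemma f_wE n (X : conf R d n) : z n != 0 ->
  f_w p_i p_j rho_i rho_j w X =
  fsdens p_i rho_i X `^ (1 - w) * fsdens p_j rho_j X `^ w / Nw.
Proof.
move=> zn0; rewrite fsdens_geo_mean /f_w /fsdens /p_w /rho_w.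
transitivity (pw n * n`!%:R * (rho_i n X `^ (1 - w) * rho_j n X `^ w) / Nw * (z n / z n)).
  by ring.
by rewrite divff // mulr1.
Qed.

Lemma ftilde_wE n (X : conf R d n) : z n != 0 -> Nw != 0 ->
  ftilde_w p_i p_j rho_i rho_j w X =
  E_ptilde_z p_i p_j rho_i rho_j w / z n * f_w p_i p_j rho_i rho_j w X.
Proof.
move=> zn0 Nw_neq0; rewrite E_ptilde_zE /ftilde_w /f_w /fsdens /ptilde_w /p_w /rho_w.
set g := rho_i n X `^ (1 - w) * rho_j n X `^ w.
transitivity (pw n / Nt * n`!%:R * (g / z n) * (Nw / Nw) * (z n / z n)).
  by rewrite !divff // !mulr1.
by ring.
Qed.

Lemma fsdens_geo_mean_le_f_w n (X : conf R d n) : z n != 0 -> 0 < Nw ->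
  fsdens p_i rho_i X `^ (1 - w) * fsdens p_j rho_j X `^ w <=
  f_w p_i p_j rho_i rho_j w X.
Proof.
move=> zn0 Nw_gt0; rewrite f_wE // ler_pdivlMr // ler_piMr ?N_w_le1 //.
by rewrite mulr_ge0 ?powR_ge0.
Qed.

End fusion.

Theorem proposition3 (R : realType) (d : nat)
    (p_i p_j : nat -> R) (rho_i rho_j : forall n, conf R d n -> R) (w : R)
    (hpi : is_pmf p_i) (hpj : is_pmf p_j)
    (hri : is_loc_densities rho_i) (hrj : is_loc_densities rho_j)
    (hw0 : 0 <= w) (hw1 : w <= 1)
    (n : nat) (X : conf R d n) (hX : uniq X)
    (hfw : 0 < f_w p_i p_j rho_i rho_j w X)
    (hz : 0 < z_w rho_i rho_j w n) :
  (E_ptilde_z p_i p_j rho_i rho_j w / z_w rho_i rho_j w n <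
     Num.min (fsdens p_i rho_i X) (fsdens p_j rho_j X)
       / f_w p_i p_j rho_i rho_j w X ->
   ftilde_w p_i p_j rho_i rho_j w X <
     Num.min (fsdens p_i rho_i X) (fsdens p_j rho_j X)) /\
  Num.min (fsdens p_i rho_i X) (fsdens p_j rho_j X)
    / f_w p_i p_j rho_i rho_j w X <= 1.
Proof.
have zn0 : z_w rho_i rho_j w n != 0 by rewrite gt_eqF.
have Nw_gt0 : 0 < N_w p_i p_j rho_i rho_j w.
  rewrite lt_def N_w_ge0 // andbT; apply: contraTneq hfw => Nw0.
  by rewrite f_wE // Nw0 invr0 mulr0 ltxx.
split.
  by move=> ratio_lt; rewrite ftilde_wE ?gt_eqF // -ltr_pdivlMr.
rewrite ler_pdivrMr // mul1r.
have [[pi0 _] [pj0 _]] := (hpi, hpj).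
have [[_ [ri0 _]] [_ [rj0 _]]] := (hri n, hrj n).
apply: le_trans (fsdens_geo_mean_le_f_w hpi hpj hri hrj hw0 hw1 _ X zn0 Nw_gt0).
by apply: min_le_geo_mean; rewrite // /fsdens !mulr_ge0.
Qed.
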